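(* Let $I=(c,d)$ and $J$ be open intervals of $\mathbb{R}$ with $c\in\mathbb{R}$, let $O=I\times J$, and let $L:O\to\mathbb{R}$, $(x,y)\mapsto L(x,y)$, be of class $C^1$. Let $a<b$ and $\alpha,\beta\in\mathbb{R}$. Let $X$ be the set of all $\gamma\in C([a,b])$ which are continuously differentiable on $(a,b]$, satisfy $(\gamma(t),\gamma'(t))\in O$ for all $t\in(a,b]$, $\gamma(a)=\alpha$, $\gamma(b)=\beta$, and for which the (possibly improper at $a$) integral $$\mathcal{L}(\gamma)=\int_a^b L(\gamma(t),\gamma'(t))\,dt$$ is defined. If $\gamma\in X$ is an extremum (a minimum or a maximum) of $\mathcal{L}$ on $X$, then $\gamma$ satisfies the Euler–Lagrange equation on $(a,b]$, i.e. for all $t\in(a,b]$, $$\frac{\partial L}{\partial x}(\gamma(t),\gamma'(t))=\frac{d}{dt}\,\frac{\partial L}{\partial y}(\gamma(t),\gamma'(t)).$$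
   Context: Here $C([a,b])$ denotes the space of real-valued continuous functions on $[a,b]$. The Euler–Lagrange equation includes the assertion that $t\mapsto \frac{\partial L}{\partial y}(\gamma(t),\gamma'(t))$ is differentiable on $(a,b]$ (one-sided at $b$). *)

From Stdlib Require Import Reals.
From Coquelicot Require Import Coquelicot.
Open Scope R_scope.

(* O = I x J with I = (c,d), J = (j1,j2); endpoints in Rbar (possibly infinite). *)
Definition inO (c : R) (d j1 j2 : Rbar) (x y : R) : Prop :=
  (c < x /\ Rbar_lt x d) /\ (Rbar_lt j1 y /\ Rbar_lt y j2).

Definition pdx (L : R -> R -> R) (p : R * R) : R := Derive (fun u => L u (snd p)) (fst p).
Definition pdy (L : R -> R -> R) (p : R * R) : R := Derive (fun v => L (fst p) v) (snd p).

Definition C1_on (O : R -> R -> Prop) (L : R -> R -> R) : Prop :=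
  forall x y, O x y ->
    ex_derive (fun u => L u y) x /\ ex_derive (fun v => L x v) y /\
    continuous (fun p : R * R => L (fst p) (snd p)) (x, y) /\
    continuous (pdx L) (x, y) /\ continuous (pdy L) (x, y).

Definition cont_on_ab (g : R -> R) (a b : R) : Prop :=
  forall t, a <= t <= b ->
    filterlim g (within (fun s => a <= s <= b) (locally t)) (locally (g t)).

Definition deriv_on_aB (g g' : R -> R) (a b : R) : Prop :=
  (forall t, a < t < b -> is_derive g t (g' t)) /\
  filterlim (fun s => (g s - g b) / (s - b)) (at_left b) (locally (g' b)).

Definition cont_on_aB (h : R -> R) (a b : R) : Prop :=
  (forall t, a < t < b -> continuous h t) /\
  filterlim h (at_left b) (locally (h b)).

Definition lag_integrand (L : R -> R -> R) (g g' : R -> R) (t : R) : R := L (g t) (g' t).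

(* (g, g') describes an element g of X, g' being its derivative on (a,b]
   (which is uniquely determined on (a,b] by g). *)
Definition inX (c : R) (d j1 j2 : Rbar) (L : R -> R -> R) (a b alpha beta : R)
  (g g' : R -> R) : Prop :=
  cont_on_ab g a b /\
  deriv_on_aB g g' a b /\ cont_on_aB g' a b /\
  (forall t, a < t <= b -> inO c d j1 j2 (g t) (g' t)) /\
  g a = alpha /\ g b = beta /\
  ex_RInt_gen (lag_integrand L g g') (at_right a) (at_point b).

Definition lag_value (L : R -> R -> R) (a b : R) (g g' : R -> R) : R :=
  RInt_gen (lag_integrand L g g') (at_right a) (at_point b).

(* A variation [g + e eta], with [eta] of class C^1 supported in a segment [p, q] of (a, b),
   stays in X for small [e] and changes the action only through a proper integral over
   [p, q]; differentiating under the integral sign at the extremum [e = 0] shows that the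
   first variation [RInt (Lx eta + Ly eta') p q] vanishes, where [Lx] and [Ly] are the
   partial derivatives of [L] along [(g, g')]. Integrating [Lx eta] by parts, the
   du Bois-Reymond lemma makes [Ly - RInt Lx p _] constant on (p, q), so [Ly] is
   differentiable on (a, b) with derivative [Lx]. At [b] the one-sided derivative follows
   from the mean value theorem and the left continuity of [Lx] and [Ly]. *)

From Stdlib Require Import Reals Lra.
From Coquelicot Require Import Coquelicot.
Open Scope R_scope.

Lemma ball_R (x y e : R) : ball x e y <-> Rabs (y - x) < e.
Proof. reflexivity. Qed.

Lemma locally_R (x : R) (P : R -> Prop) :
  locally x P <-> exists d : posreal, forall y, Rabs (y - x) < d -> P y.
Proof. reflexivity. Qed.

Lemma filterlim_locally_R {T} (F : (T -> Prop) -> Prop) {FF : Filter F} (f : T -> R) (l : R) :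
  filterlim f F (locally l) <-> forall e : posreal, F (fun x => Rabs (f x - l) < e).
Proof.
  rewrite filterlim_locally. reflexivity.
Qed.

Lemma continuous_R (f : R -> R) (x : R) :
  continuous f x <->
  forall e : posreal, exists d : posreal, forall y, Rabs (y - x) < d -> Rabs (f y - f x) < e.
Proof. apply filterlim_locally_R, locally_filter. Qed.

Lemma at_left_R (f : R -> R) (b l : R) :
  filterlim f (at_left b) (locally l) <->
  forall e : posreal, exists d : posreal,
    forall s, Rabs (s - b) < d -> s < b -> Rabs (f s - l) < e.
Proof. apply filterlim_locally_R, within_filter, locally_filter. Qed.

Lemma continuous_2d_R (f : R * R -> R) (x y : R) :
  continuous f (x, y) -> forall e : posreal, exists d : posreal, forall u v,
    Rabs (u - x) < d -> Rabs (v - y) < d -> Rabs (f (u, v) - f (x, y)) < e.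
Proof.
  intros Hf e.
  assert (H2 : continuity_2d_pt (fun u v => f (u, v)) x y).
  { apply continuity_2d_pt_filterlim.
    eapply filterlim_ext; [|exact Hf]. intros [u v]; reflexivity. }
  exact (H2 e).
Qed.

Lemma filterlim_comp_pair {T} (F : (T -> Prop) -> Prop) {FF : Filter F}
  (H : R * R -> R) (X Y : T -> R) (x y : R) :
  filterlim X F (locally x) -> filterlim Y F (locally y) -> continuous H (x, y) ->
  filterlim (fun s => H (X s, Y s)) F (locally (H (x, y))).
Proof.
  intros HX HY HH.
  apply (filterlim_comp _ _ _ (fun s => (X s, Y s)) H F (locally (x, y))); [|exact HH].
  intros P [e HP].
  unfold filtermap.
  apply (filter_imp (fun s => ball x e (X s) /\ ball y e (Y s))).
  - intros s Hs. now apply HP.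
  - apply filter_and; [apply HX | apply HY]; now exists e.
Qed.

Lemma continuity_2d_pt_comp_pair (F : R * R -> R) (X Y : R -> R -> R) (x y : R) :
  continuous F (X x y, Y x y) -> continuity_2d_pt X x y -> continuity_2d_pt Y x y ->
  continuity_2d_pt (fun u v => F (X u v, Y u v)) x y.
Proof.
  intros HF HX HY e.
  destruct (continuous_2d_R F _ _ HF e) as [d Hd].
  destruct (HX d) as [d1 H1], (HY d) as [d2 H2].
  exists (mkposreal _ (Rmin_pos _ _ (cond_pos d1) (cond_pos d2))); simpl.
  intros u v Hu Hv.
  assert (A1 := Rmin_l d1 d2). assert (A2 := Rmin_r d1 d2).
  apply Hd; [apply H1 | apply H2]; lra.
Qed.

Lemma continuous_comp_pair (H : R * R -> R) (X Y : R -> R) (t : R) :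
  continuous X t -> continuous Y t -> continuous H (X t, Y t) ->
  continuous (fun s => H (X s, Y s)) t.
Proof. exact (filterlim_comp_pair (locally t) H X Y (X t) (Y t)). Qed.

Lemma filterlim_plus_scal {T} (F : (T -> Prop) -> Prop) {FF : Filter F}
  (f k : T -> R) (l m e : R) :
  filterlim f F (locally l) -> filterlim k F (locally m) ->
  filterlim (fun x => f x + e * k x) F (locally (l + e * m)).
Proof.
  intros Hf Hk.
  apply (filterlim_comp_pair F (fun z => fst z + e * snd z) f k l m Hf Hk).
  apply (continuous_plus fst (fun z => e * snd z)); [apply continuous_fst|].
  apply (continuous_mult (fun _ => e) snd); [apply continuous_const | apply continuous_snd].
Qed.

Lemma continuous_plus_scal (f k : R -> R) (e t : R) :
  continuous f t -> continuous k t -> continuous (fun x => f x + e * k x) t.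
Proof. exact (filterlim_plus_scal (locally t) f k (f t) (k t) e). Qed.

Lemma continuity_2d_pt_line (X Z : R -> R) (u0 t : R) :
  continuity_pt X t -> continuity_pt Z t ->
  continuity_2d_pt (fun u v => X v + u * Z v) u0 t.
Proof.
  intros HX HZ. apply continuity_2d_pt_plus.
  - apply (continuity_1d_2d_pt_comp X (fun _ v => v)); [exact HX | apply continuity_2d_pt_id2].
  - apply continuity_2d_pt_mult; [apply continuity_2d_pt_id1|].
    apply (continuity_1d_2d_pt_comp Z (fun _ v => v)); [exact HZ | apply continuity_2d_pt_id2].
Qed.

Lemma at_left_le_within_segment (a b : R) : a < b ->
  filter_le (at_left b) (within (fun s => a <= s <= b) (locally b)).
Proof.
  intros Hab P [e HP].
  exists (mkposreal (Rmin e (b - a)) ltac:(apply Rmin_pos; [apply cond_pos | lra])); simpl.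
  intros y Hy Hyb; simpl in Hyb.
  assert (Hy' : Rabs (y - b) < Rmin e (b - a)) by exact Hy.
  apply Rmin_Rgt in Hy' as [Hy1 Hy2].
  apply HP; [exact Hy1|]. rewrite Rabs_left in Hy2 by lra. lra.
Qed.

Lemma ex_derive_continuous_R (f : R -> R) (t : R) : ex_derive f t -> continuous f t.
Proof. exact (ex_derive_continuous (K := R_AbsRing) (V := R_NormedModule) f t). Qed.

Lemma is_derive_continuous_R (f : R -> R) (t l : R) : is_derive f t l -> continuous f t.
Proof. intros H. apply ex_derive_continuous_R. now exists l. Qed.

Lemma MVT_linear_error (f : R -> R) (x u l e : R) :
  (forall w, Rmin x u <= w <= Rmax x u -> ex_derive f w) ->
  (forall w, Rmin x u <= w <= Rmax x u -> Rabs (Derive f w - l) <= e) ->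
  Rabs (f u - f x - l * (u - x)) <= e * Rabs (u - x).
Proof.
  intros Hd Hb.
  destruct (MVT_gen f x u (Derive f)) as [w [Hw ->]].
  - intros w Hw. apply Derive_correct, Hd. lra.
  - intros w Hw. apply continuity_pt_filterlim, ex_derive_continuous_R, Hd. lra.
  - replace (Derive f w * (u - x) - l * (u - x)) with ((Derive f w - l) * (u - x)) by ring.
    rewrite Rabs_mult. apply Rmult_le_compat_r; [apply Rabs_pos | now apply Hb].
Qed.

Lemma continuous_segment_min_pos (k : R -> R) (p q : R) : p <= q ->
  (forall t, p <= t <= q -> continuous k t) -> (forall t, p <= t <= q -> 0 < k t) ->
  exists m, 0 < m /\ forall t, p <= t <= q -> m <= k t.
Proof.
  intros Hpq Hc Hp.
  destruct (continuity_ab_min k p q Hpq) as [t0 [Hmin Ht0]].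
  - intros t Ht. now apply continuity_pt_filterlim, Hc.
  - exists (k t0). auto.
Qed.

Lemma continuous_segment_bounded (k : R -> R) (p q : R) : p <= q ->
  (forall t, p <= t <= q -> continuous k t) ->
  exists M, 0 <= M /\ forall t, p <= t <= q -> Rabs (k t) <= M.
Proof.
  intros Hpq Hc.
  destruct (continuity_ab_min (fun t => - Rabs (k t)) p q Hpq) as [t0 [Hmin Ht0]].
  - intros t Ht. apply continuity_pt_filterlim.
    apply (continuous_opp (fun t => Rabs (k t))), continuous_Rabs_comp, Hc, Ht.
  - exists (Rabs (k t0)). split; [apply Rabs_pos|]. intros t Ht. specialize (Hmin t Ht). lra.
Qed.

Lemma ex_RInt_segment (k : R -> R) (x y : R) : x <= y ->
  (forall t, x <= t <= y -> continuous k t) -> ex_RInt k x y.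
Proof.
  intros Hxy Hk. apply (ex_RInt_continuous (V := R_CompleteNormedModule)).
  rewrite Rmin_left, Rmax_right by exact Hxy. exact Hk.
Qed.

Lemma is_RInt_zero (k : R -> R) (x y : R) :
  (forall t, Rmin x y < t < Rmax x y -> k t = 0) -> is_RInt k x y 0.
Proof.
  intros H. apply (is_RInt_ext (fun _ => 0)); [intros t Ht; symmetry; now apply H|].
  assert (H0 := is_RInt_const x y 0).
  change (scal (y - x) 0) with ((y - x) * 0) in H0. now rewrite Rmult_0_r in H0.
Qed.

Lemma RInt_gt_0_at (k : R -> R) (p q s : R) : p < s < q ->
  (forall t, p <= t <= q -> continuous k t) -> (forall t, p < t < q -> 0 <= k t) -> 0 < k s ->
  0 < RInt k p q.
Proof.
  intros Hs Hc Hpos Hks.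
  destruct (proj1 (continuous_R k s) (Hc s ltac:(lra)) (mkposreal (k s / 2) ltac:(lra)))
    as [dl Hd]; simpl in Hd.
  set (r := Rmin (dl / 2) (Rmin ((s - p) / 2) ((q - s) / 2))).
  assert (hdl := cond_pos dl).
  assert (A1 := Rmin_l (dl / 2) (Rmin ((s - p) / 2) ((q - s) / 2))).
  assert (A2 := Rmin_r (dl / 2) (Rmin ((s - p) / 2) ((q - s) / 2))).
  assert (A3 := Rmin_l ((s - p) / 2) ((q - s) / 2)).
  assert (A4 := Rmin_r ((s - p) / 2) ((q - s) / 2)).
  assert (Hr : 0 < r) by (unfold r; repeat apply Rmin_pos; lra).
  fold r in A1, A2.
  assert (Hex : forall x y, p <= x <= y -> y <= q -> ex_RInt k x y).
  { intros x y Hx Hy. apply ex_RInt_segment; [lra|]. intros t Ht. apply Hc. lra. }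
  rewrite <- (RInt_Chasles (V := R_CompleteNormedModule) k p (s + r) q),
    <- (RInt_Chasles (V := R_CompleteNormedModule) k p (s - r) (s + r))
    by (apply Hex; lra).
  assert (I1 : 0 <= RInt k p (s - r)).
  { apply RInt_ge_0; try apply Hex; try lra. intros t Ht; apply Hpos; lra. }
  assert (I3 : 0 <= RInt k (s + r) q).
  { apply RInt_ge_0; try apply Hex; try lra. intros t Ht; apply Hpos; lra. }
  assert (I2 : 0 < RInt k (s - r) (s + r)).
  { apply RInt_gt_0; try lra.
    - intros t Ht.
      assert (Hts : Rabs (t - s) < dl) by (unfold Rabs; destruct Rcase_abs; lra).
      specialize (Hd t Hts). unfold Rabs in Hd; destruct Rcase_abs in Hd; lra.
    - intros t Ht. apply Hc; lra. }
  unfold plus; simpl. lra.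
Qed.

Lemma is_derive_RInt_interior (k : R -> R) (a b p s : R) : a < p < b -> a < s < b ->
  (forall t, a < t < b -> continuous k t) -> is_derive (fun x => RInt k p x) s (k s).
Proof.
  intros Hp Hs Hk. apply (is_derive_RInt k (fun x => RInt k p x) p s); [|now apply Hk].
  apply locally_R. exists (mkposreal (Rmin (s - a) (b - s)) ltac:(apply Rmin_pos; lra)); simpl.
  intros y Hy.
  assert (A1 := Rmin_l (s - a) (b - s)). assert (A2 := Rmin_r (s - a) (b - s)).
  assert (Hy' : a < y < b) by (unfold Rabs in Hy; destruct Rcase_abs in Hy; lra).
  apply (RInt_correct (V := R_CompleteNormedModule)).
  apply (ex_RInt_continuous (V := R_CompleteNormedModule)). intros t Ht.
  apply Hk. unfold Rmin, Rmax in Ht; destruct Rle_dec in Ht; lra.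
Qed.

Lemma is_derive_local_extremum (f : R -> R) (x l e : R) : 0 < e -> is_derive f x l ->
  (forall y, Rabs (y - x) < e -> f x <= f y) \/ (forall y, Rabs (y - x) < e -> f y <= f x) ->
  l = 0.
Proof.
  intros He Hd Hext. apply is_derive_Reals in Hd.
  set (pr := exist (fun l => derivable_pt_lim f x l) l Hd : derivable_pt f x).
  change l with (derive_pt f x pr).
  assert (Hball : forall y, x - e < y -> y < x + e -> Rabs (y - x) < e)
    by (intros y H1 H2; apply Rabs_lt_between'; lra).
  destruct Hext as [Hmin | Hmax].
  - apply (deriv_minimum f (x - e) (x + e)); try lra. auto.
  - apply (deriv_maximum f (x - e) (x + e)); try lra. auto.
Qed.

Lemma continuous_Rmin_left (f : R -> R) (b : R) :
  filterlim f (at_left b) (locally (f b)) -> continuous (fun s => f (Rmin s b)) b.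
Proof.
  intros Hf. apply continuous_R. intros e.
  destruct (proj1 (at_left_R f b (f b)) Hf e) as [d Hd].
  exists d. intros y Hy. rewrite (Rmin_left b b) by lra.
  destruct (Rlt_or_le y b) as [Hyb | Hby].
  - rewrite Rmin_left by lra. now apply Hd.
  - rewrite Rmin_right, Rminus_eq_0, Rabs_R0 by exact Hby. apply cond_pos.
Qed.

Lemma left_derive_of_interior_derive (f f' : R -> R) (a b : R) : a < b ->
  (forall t, a < t < b -> is_derive f t (f' t)) ->
  filterlim f (at_left b) (locally (f b)) -> filterlim f' (at_left b) (locally (f' b)) ->
  filterlim (fun s => (f s - f b) / (s - b)) (at_left b) (locally (f' b)).
Proof.
  intros Hab Hd Hf Hf'. apply at_left_R. intros e.
  destruct (proj1 (at_left_R f' b (f' b)) Hf' e) as [d Hd'].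
  exists (mkposreal (Rmin d (b - a)) ltac:(apply Rmin_pos; [apply cond_pos | lra])); simpl.
  intros s Hs Hsb.
  assert (A1 := Rmin_l d (b - a)). assert (A2 := Rmin_r d (b - a)).
  assert (Has : a < s) by (rewrite Rabs_left in Hs by lra; lra).
  (* Frozen at [f b] right of [b], [f] becomes continuous at [b]: the mean value theorem
     applies on [s, b]. *)
  set (fb := fun x => f (Rmin x b)).
  destruct (MVT_gen fb s b f') as [w [Hw Hmvt]]; rewrite Rmin_left, Rmax_right in * by lra.
  - intros x Hx. apply (is_derive_ext_loc f); [|apply Hd; lra].
    apply locally_R. exists (mkposreal (b - x) ltac:(lra)); simpl. intros y Hy.
    unfold fb. rewrite Rmin_left; [reflexivity|].
    rewrite Rabs_lt_between in Hy. lra.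
  - intros x Hx. apply continuity_pt_filterlim.
    destruct (Req_dec x b) as [-> | Hxb]; [now apply continuous_Rmin_left|].
    apply (continuous_ext_loc _ f); [|apply ex_derive_continuous_R; eexists; apply Hd; lra].
    apply locally_R. exists (mkposreal (b - x) ltac:(lra)); simpl. intros y Hy.
    unfold fb. rewrite Rmin_left; [reflexivity|].
    rewrite Rabs_lt_between in Hy. lra.
  - unfold fb in Hmvt. rewrite !Rmin_left in Hmvt by lra.
    replace ((f s - f b) / (s - b)) with (f' w) by (field_simplify_eq; lra).
    destruct (Req_dec w b) as [-> | Hwb].
    + rewrite Rminus_eq_0, Rabs_R0. apply cond_pos.
    + assert (Hwb' : w < b) by (destruct (proj2 Hw); [assumption | contradiction]).
      rewrite Rabs_left in Hs by lra.
      apply Hd'; [rewrite Rabs_left by lra; lra | exact Hwb'].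
Qed.

(** * Differentiability from continuous partial derivatives *)

Lemma differentiable_pt_lim_of_C1 (O : R -> R -> Prop) (L : R -> R -> R) (x y : R) :
  C1_on O L -> locally_2d O x y ->
  differentiable_pt_lim L x y (pdx L (x, y)) (pdy L (x, y)).
Proof.
  intros HC [d0 Hd0] e.
  assert (Oxy : O x y) by (apply Hd0; rewrite Rminus_eq_0, Rabs_R0; apply cond_pos).
  destruct (HC x y Oxy) as (_ & _ & _ & Cx & Cy).
  destruct (continuous_2d_R _ _ _ Cx (mkposreal (e / 2) ltac:(destruct e; simpl; lra)))
    as [d1 H1].
  destruct (continuous_2d_R _ _ _ Cy (mkposreal (e / 2) ltac:(destruct e; simpl; lra)))
    as [d2 H2].
  simpl in H1, H2.
  exists (mkposreal (Rmin d0 (Rmin d1 d2))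
            ltac:(repeat apply Rmin_pos; apply cond_pos)); simpl.
  intros u v Hu Hv.
  assert (A1 := Rmin_l d0 (Rmin d1 d2)). assert (A2 := Rmin_r d0 (Rmin d1 d2)).
  assert (A3 := Rmin_l d1 d2). assert (A4 := Rmin_r d1 d2).
  assert (Hbetween : forall r s w, Rmin r s <= w <= Rmax r s -> Rabs (w - r) <= Rabs (s - r)).
  { intros r s w Hw. unfold Rmin, Rmax in Hw. destruct (Rle_dec r s);
      unfold Rabs; repeat destruct Rcase_abs; lra. }
  (* Move first in [x], then in [y], using the mean value theorem on each leg. *)
  assert (Px : Rabs (L u v - L x v - pdx L (x, y) * (u - x)) <= e / 2 * Rabs (u - x)).
  { apply (MVT_linear_error (fun w => L w v)); intros w Hw; specialize (Hbetween x u w Hw).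
    - apply (HC w v), Hd0; lra.
    - apply Rlt_le, (H1 w v); lra. }
  assert (Py : Rabs (L x v - L x y - pdy L (x, y) * (v - y)) <= e / 2 * Rabs (v - y)).
  { assert (Hxx : Rabs (x - x) = 0) by (rewrite Rminus_eq_0; apply Rabs_R0).
    assert (hd0 := cond_pos d0). assert (hd2 := cond_pos d2).
    apply (MVT_linear_error (fun w => L x w)); intros w Hw; specialize (Hbetween y v w Hw).
    - apply (HC x w), Hd0; lra.
    - apply Rlt_le, (H2 x w); lra. }
  replace (L u v - L x y - (pdx L (x, y) * (u - x) + pdy L (x, y) * (v - y)))
    with ((L u v - L x v - pdx L (x, y) * (u - x)) + (L x v - L x y - pdy L (x, y) * (v - y)))
    by ring.
  eapply Rle_trans; [apply Rabs_triang|].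
  assert (Rabs (u - x) <= Rmax (Rabs (u - x)) (Rabs (v - y))) by apply Rmax_l.
  assert (Rabs (v - y) <= Rmax (Rabs (u - x)) (Rabs (v - y))) by apply Rmax_r.
  destruct e as [e he]; simpl in *. nra.
Qed.

Lemma is_derive_along_line (O : R -> R -> Prop) (L : R -> R -> R) (x y h k u0 : R) :
  C1_on O L -> locally_2d O (x + u0 * h) (y + u0 * k) ->
  is_derive (fun u => L (x + u * h) (y + u * k)) u0
    (pdx L (x + u0 * h, y + u0 * k) * h + pdy L (x + u0 * h, y + u0 * k) * k).
Proof.
  intros HC HO. apply is_derive_Reals.
  apply (derivable_pt_lim_comp_2d L (fun u => x + u * h) (fun u => y + u * k)).
  - exact (differentiable_pt_lim_of_C1 O L _ _ HC HO).
  - apply is_derive_Reals. auto_derive; [exact I | ring].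
  - apply is_derive_Reals. auto_derive; [exact I | ring].
Qed.

Lemma continuity_2d_pt_derivative_along_lines (L : R -> R -> R) (X Y Z W : R -> R) (u0 t : R) :
  continuity_pt X t -> continuity_pt Y t -> continuity_pt Z t -> continuity_pt W t ->
  continuous (pdx L) (X t + u0 * Z t, Y t + u0 * W t) ->
  continuous (pdy L) (X t + u0 * Z t, Y t + u0 * W t) ->
  continuity_2d_pt (fun u v => pdx L (X v + u * Z v, Y v + u * W v) * Z v
                              + pdy L (X v + u * Z v, Y v + u * W v) * W v) u0 t.
Proof.
  intros HX HY HZ HW Cx Cy.
  assert (Hcomp : forall F, continuous F (X t + u0 * Z t, Y t + u0 * W t) ->
            continuity_2d_pt (fun u v => F (X v + u * Z v, Y v + u * W v)) u0 t).
  { intros F HF. apply (continuity_2d_pt_comp_pair F _ _ u0 t HF);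
      now apply continuity_2d_pt_line. }
  assert (Hfactor : forall V, continuity_pt V t -> continuity_2d_pt (fun _ v => V v) u0 t).
  { intros V HV. exact (continuity_1d_2d_pt_comp V (fun _ v => v) u0 t HV
                          (continuity_2d_pt_id2 u0 t)). }
  apply (continuity_2d_pt_plus
           (fun u v => pdx L (X v + u * Z v, Y v + u * W v) * Z v)
           (fun u v => pdy L (X v + u * Z v, Y v + u * W v) * W v)).
  - apply (continuity_2d_pt_mult
             (fun u v => pdx L (X v + u * Z v, Y v + u * W v)) (fun _ v => Z v));
      [exact (Hcomp _ Cx) | now apply Hfactor].
  - apply (continuity_2d_pt_mult
             (fun u v => pdy L (X v + u * Z v, Y v + u * W v)) (fun _ v => W v));
      [exact (Hcomp _ Cy) | now apply Hfactor].
Qed.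

Lemma RInt_ext_R (f k : R -> R) (x y : R) :
  (forall t, Rmin x y < t < Rmax x y -> f t = k t) -> RInt f x y = RInt k x y.
Proof. exact (RInt_ext (V := R_CompleteNormedModule) f k x y). Qed.

Lemma RInt_minus_R (f k : R -> R) (x y : R) : ex_RInt f x y -> ex_RInt k x y ->
  RInt (fun s => f s - k s) x y = RInt f x y - RInt k x y.
Proof. exact (RInt_minus (V := R_CompleteNormedModule) f k x y). Qed.

Lemma RInt_scal_R (f : R -> R) (l x y : R) : ex_RInt f x y ->
  RInt (fun s => l * f s) x y = l * RInt f x y.
Proof. exact (RInt_scal (V := R_CompleteNormedModule) f x y l). Qed.

Lemma is_RInt_gen_compact_support (k : R -> R) (a b p q : R) :
  a < p -> p <= q -> q < b -> (forall t, t < p \/ q < t -> k t = 0) -> ex_RInt k p q ->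
  is_RInt_gen k (at_right a) (at_point b) (RInt k p q).
Proof.
  intros Hap Hpq Hqb Hk Hex P HP.
  apply (Filter_prod _ _ _ (fun x => a < x < p) (fun y => y = b)).
  - apply locally_R. exists (mkposreal (p - a) ltac:(lra)); simpl.
    intros y Hy Hay. rewrite Rabs_lt_between in Hy. lra.
  - reflexivity.
  - intros x y Hx ->. exists (RInt k p q). split; [|now apply locally_singleton].
    replace (RInt k p q) with (plus (plus 0 (RInt k p q)) 0) by (unfold plus; simpl; ring).
    apply (is_RInt_Chasles k x q b); [apply (is_RInt_Chasles k x p q)|].
    + apply is_RInt_zero. intros t Ht. apply Hk. rewrite Rmax_right in Ht by lra. lra.
    + exact (RInt_correct (V := R_CompleteNormedModule) k p q Hex).
    + apply is_RInt_zero. intros t Ht. apply Hk. rewrite Rmin_left in Ht by lra. lra.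
Qed.

Lemma is_RInt_gen_change_on_segment (f k : R -> R) (a b p q l : R) :
  a < p -> p <= q -> q < b ->
  (forall t, t < p \/ q < t -> k t = f t) -> ex_RInt k p q -> ex_RInt f p q ->
  is_RInt_gen f (at_right a) (at_point b) l ->
  is_RInt_gen k (at_right a) (at_point b) (l + (RInt k p q - RInt f p q)).
Proof.
  intros Hap Hpq Hqb Heq Hk Hf Hl.
  rewrite <- (RInt_minus_R k f p q Hk Hf).
  assert (Hd := is_RInt_gen_compact_support (fun t => k t - f t) a b p q Hap Hpq Hqb).
  assert (Hs := is_RInt_gen_plus f (fun t => k t - f t) _ _ Hl
    (Hd ltac:(intros t Ht; cbv beta; rewrite Heq by exact Ht; ring) (ex_RInt_minus _ _ _ _ Hk Hf))).
  eapply is_RInt_gen_ext; [|exact Hs].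
  apply (Filter_prod _ _ _ (fun _ => True) (fun _ => True)); try apply filter_true.
  intros x y _ _ t _. unfold plus; simpl. ring.
Qed.

(** * The du Bois-Reymond lemma *)

(* Closed forms of [Rmax p (Rmin s q)] and [Rmax 0 ((s - p) * (q - s))], continuous
   because [Rabs] is. *)
Definition clamp (p q s : R) : R := (p + q + Rabs (s - p) - Rabs (s - q)) / 2.

Definition bump (p q s : R) : R := ((s - p) * (q - s) + Rabs ((s - p) * (q - s))) / 2.

Lemma clamp_between (p q s : R) : p <= q -> p <= clamp p q s <= q.
Proof. intros H. unfold clamp, Rabs. repeat destruct Rcase_abs; lra. Qed.

Lemma clamp_id (p q s : R) : p <= s <= q -> clamp p q s = s.
Proof. intros H. unfold clamp, Rabs. repeat destruct Rcase_abs; lra. Qed.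

Lemma bump_out (p q s : R) : p <= q -> s <= p \/ q <= s -> bump p q s = 0.
Proof.
  intros H Hs. unfold bump. assert ((s - p) * (q - s) <= 0) by (destruct Hs; nra).
  rewrite Rabs_left1 by lra. lra.
Qed.

Lemma bump_in (p q s : R) : p <= s <= q -> bump p q s = (s - p) * (q - s).
Proof.
  intros Hs. unfold bump. assert (0 <= (s - p) * (q - s)) by nra.
  rewrite Rabs_pos_eq by lra. lra.
Qed.

Lemma continuous_clamp (p q s : R) : continuous (clamp p q) s.
Proof.
  unfold clamp.
  apply (continuous_mult (fun s => p + q + Rabs (s - p) - Rabs (s - q)) (fun _ => / 2));
    [|apply continuous_const].
  apply (continuous_minus (fun s => p + q + Rabs (s - p)) (fun s => Rabs (s - q))).
  - apply (continuous_plus (fun _ => p + q) (fun s => Rabs (s - p))); [apply continuous_const|].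
    apply continuous_Rabs_comp.
    apply (continuous_minus (fun s => s) (fun _ => p));
      [apply continuous_id | apply continuous_const].
  - apply continuous_Rabs_comp.
    apply (continuous_minus (fun s => s) (fun _ => q));
      [apply continuous_id | apply continuous_const].
Qed.

Lemma continuous_bump (p q s : R) : continuous (bump p q) s.
Proof.
  assert (Hc : continuous (fun s => (s - p) * (q - s)) s).
  { apply (continuous_mult (fun s => s - p) (fun s => q - s)).
    - apply (continuous_minus (fun s => s) (fun _ => p));
        [apply continuous_id | apply continuous_const].
    - apply (continuous_minus (fun _ => q) (fun s => s));
        [apply continuous_const | apply continuous_id]. }
  unfold bump.
  apply (continuous_mult (fun s => (s - p) * (q - s) + Rabs ((s - p) * (q - s))) (fun _ => / 2));
    [|apply continuous_const].
  apply (continuous_plus (fun s => (s - p) * (q - s)) (fun s => Rabs ((s - p) * (q - s))));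
    [exact Hc | now apply continuous_Rabs_comp].
Qed.

Lemma compactly_supported_primitive (k : R -> R) (p q : R) : p < q ->
  (forall t, continuous k t) -> (forall s, s <= p \/ q <= s -> k s = 0) -> RInt k p q = 0 ->
  exists eta, (forall t, is_derive eta t (k t)) /\ (forall t, t <= p \/ q <= t -> eta t = 0).
Proof.
  intros Hpq Hk Hout Hmean.
  assert (Hex : forall x y, ex_RInt k x y)
    by (intros x y; apply (ex_RInt_continuous (V := R_CompleteNormedModule)); auto).
  exists (fun s => RInt k p s). split.
  - intros t. apply (is_derive_RInt k _ p t); [|apply Hk].
    apply filter_forall. intros y. apply (RInt_correct (V := R_CompleteNormedModule)), Hex.
  - intros t [Ht | Ht].
    + apply is_RInt_unique, is_RInt_zero. intros s Hs. apply Hout. left.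
      rewrite Rmax_left in Hs by lra. lra.
    + rewrite <- (RInt_Chasles (V := R_CompleteNormedModule) k p q t) by apply Hex.
      rewrite Hmean, (is_RInt_unique k q t 0).
      * unfold plus; simpl. ring.
      * apply is_RInt_zero. intros s Hs. apply Hout. right.
        rewrite Rmin_left in Hs by lra. lra.
Qed.

Lemma RInt_sqr_bump_eq_0 (G : R -> R) (p q : R) :
  (forall t, p <= t <= q -> continuous G t) ->
  RInt (fun s => G s ^ 2 * bump p q s) p q = 0 -> forall s, p < s < q -> G s = 0.
Proof.
  intros HG H0 s Hs.
  destruct (Req_dec (G s) 0) as [E | E]; [exact E|].
  exfalso. apply (Rlt_irrefl 0). rewrite <- H0 at 2.
  apply (RInt_gt_0_at _ p q s Hs).
  - intros t Ht. apply (continuous_mult (fun s => G s ^ 2) (bump p q)); [|apply continuous_bump].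
    apply (continuous_mult G (fun s => G s ^ 1)); [now apply HG|].
    apply (continuous_mult G (fun _ => 1)); [now apply HG | apply continuous_const].
  - intros t Ht. rewrite bump_in by lra. apply Rmult_le_pos; [apply pow2_ge_0 | nra].
  - rewrite bump_in by lra. apply Rmult_lt_0_compat; [|nra].
    rewrite <- Rsqr_pow2. now apply Rsqr_pos_lt.
Qed.

Lemma du_Bois_Reymond (F : R -> R) (p q : R) : p < q ->
  (forall t, p <= t <= q -> continuous F t) ->
  (forall eta eta' : R -> R, (forall t, continuous eta' t) ->
     (forall t, is_derive eta t (eta' t)) ->
     (forall t, t <= p \/ q <= t -> eta t = 0 /\ eta' t = 0) ->
     RInt (fun t => F t * eta' t) p q = 0) ->
  exists C, forall s, p < s < q -> F s = C.
Proof.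
  intros Hpq HF Hvar.
  set (phi := bump p q).
  assert (Hphi : 0 < RInt phi p q).
  { apply RInt_gt_0; [exact Hpq | | intros; apply continuous_bump].
    intros t Ht. unfold phi. rewrite bump_in by lra. nra. }
  assert (Hphi_ex : ex_RInt phi p q)
    by (apply ex_RInt_segment; [lra | intros; apply continuous_bump]).
  assert (HFphi : ex_RInt (fun s => F s * phi s) p q).
  { apply ex_RInt_segment; [lra|]. intros t Ht.
    apply (continuous_mult F phi); [now apply HF | apply continuous_bump]. }
  (* [C] is the [phi]-weighted mean of [F]; the test function has derivative [(F - C) phi],
     with [F] read through [clamp] to be continuous on all of [R]. *)
  set (C := RInt (fun s => F s * phi s) p q / RInt phi p q).
  set (eta' := fun s => (F (clamp p q s) - C) * phi s).
  assert (eta'_in : forall s, Rmin p q < s < Rmax p q -> eta' s = (F s - C) * phi s).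
  { intros s Hs. rewrite Rmin_left, Rmax_right in Hs by lra.
    unfold eta'. rewrite clamp_id by lra. reflexivity. }
  assert (eta'_cont : forall t, continuous eta' t).
  { intros t. apply (continuous_mult (fun s => F (clamp p q s) - C) phi); [|apply continuous_bump].
    apply (continuous_minus (fun s => F (clamp p q s)) (fun _ => C)); [|apply continuous_const].
    apply (continuous_comp (clamp p q) F); [apply continuous_clamp|].
    apply HF, clamp_between. lra. }
  assert (eta'_out : forall s, s <= p \/ q <= s -> eta' s = 0).
  { intros s Hs. unfold eta', phi. rewrite bump_out by lra. ring. }
  assert (eta'_mean : RInt eta' p q = 0 :> R).
  { rewrite (RInt_ext_R eta' (fun s => F s * phi s - C * phi s))
      by (intros s Hs; rewrite eta'_in by exact Hs; ring).
    rewrite RInt_minus_R, RInt_scal_R by auto using ex_RInt_scal.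
    unfold C. field. now apply Rgt_not_eq. }
  destruct (compactly_supported_primitive eta' p q Hpq eta'_cont eta'_out eta'_mean)
    as [eta [eta_deriv eta_out]].
  specialize (Hvar eta eta' eta'_cont eta_deriv ltac:(split; auto)).
  exists C. intros s Hs.
  enough (F s - C = 0) by lra. revert s Hs.
  apply (RInt_sqr_bump_eq_0 (fun s => F s - C) p q).
  { intros t Ht. apply (continuous_minus F (fun _ => C)); [now apply HF | apply continuous_const]. }
  rewrite (RInt_ext_R _ (fun s => F s * eta' s - C * eta' s))
    by (intros s Hs; rewrite eta'_in by exact Hs; unfold phi; ring).
  assert (eta'_ex : ex_RInt eta' p q)
    by (apply ex_RInt_segment; [lra | intros; apply eta'_cont]).
  assert (Feta'_ex : ex_RInt (fun s => F s * eta' s) p q).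
  { apply ex_RInt_segment; [lra|]. intros t Ht.
    apply (continuous_mult F eta'); [now apply HF | apply eta'_cont]. }
  rewrite RInt_minus_R, RInt_scal_R, Hvar, eta'_mean by auto using ex_RInt_scal.
  now rewrite Rmult_0_r, Rminus_0_r.
Qed.


Lemma Rmin_lipschitz (x y x' y' : R) :
  Rabs (Rmin x' y' - Rmin x y) <= Rmax (Rabs (x' - x)) (Rabs (y' - y)).
Proof. unfold Rmin, Rmax, Rabs. repeat destruct Rle_dec; repeat destruct Rcase_abs; lra. Qed.

(* Distance from [x] to the nearer end of (l, u), an infinite end counting as distance 1. *)
Definition room (l u : Rbar) (x : R) : R :=
  Rmin (match l with Finite r => x - r | _ => 1 end) (match u with Finite r => r - x | _ => 1 end).

Lemma room_pos (l u : Rbar) (x : R) : Rbar_lt l x -> Rbar_lt x u -> 0 < room l u x.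
Proof. destruct l, u; simpl; intros; try apply Rmin_pos; lra. Qed.

Lemma room_inside (l u : Rbar) (x y : R) : Rbar_lt l x -> Rbar_lt x u ->
  Rabs (y - x) < room l u x -> Rbar_lt l y /\ Rbar_lt y u.
Proof.
  intros Hl Hu Hy. apply Rabs_lt_between' in Hy. unfold room in Hy.
  match type of Hy with context [Rmin ?A ?B] =>
    assert (H1 := Rmin_l A B); assert (H2 := Rmin_r A B) end.
  destruct l, u; simpl in *; split; easy || lra.
Qed.

Lemma room_lipschitz (l u : Rbar) (x y : R) : Rabs (room l u y - room l u x) <= Rabs (y - x).
Proof.
  unfold room. eapply Rle_trans; [apply Rmin_lipschitz|].
  apply Rmax_lub; destruct l, u; simpl;
    unfold Rabs; repeat destruct Rcase_abs; lra.
Qed.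

Lemma inO_locally_2d (c : R) (d j1 j2 : Rbar) (x y : R) :
  inO c d j1 j2 x y -> locally_2d (inO c d j1 j2) x y.
Proof.
  intros [[Hc Hd] [Hj1 Hj2]].
  exists (mkposreal (Rmin (room c d x) (room j1 j2 y))
            ltac:(apply Rmin_pos; apply room_pos; assumption)); simpl.
  intros u v Hu Hv. apply Rmin_Rgt in Hu as [Hu _]. apply Rmin_Rgt in Hv as [_ Hv].
  split; [apply (room_inside c d x u) | apply (room_inside j1 j2 y v)]; assumption.
Qed.

(* [room] is 1-Lipschitz, so along the curve it attains a positive minimum on [p, q]. *)
Lemma inO_uniform_margin (c : R) (d j1 j2 : Rbar) (X Y : R -> R) (p q : R) : p <= q ->
  (forall t, p <= t <= q -> inO c d j1 j2 (X t) (Y t)) ->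
  (forall t, p <= t <= q -> continuous X t) -> (forall t, p <= t <= q -> continuous Y t) ->
  exists m, 0 < m /\ forall t u v, p <= t <= q ->
    Rabs (u - X t) < m -> Rabs (v - Y t) < m -> inO c d j1 j2 u v.
Proof.
  intros Hpq HO HX HY.
  set (k := fun t => Rmin (room c d (X t)) (room j1 j2 (Y t))).
  destruct (continuous_segment_min_pos k p q Hpq) as [m [Hm Hmk]].
  - intros t Ht. apply continuous_R. intros e.
    destruct (proj1 (continuous_R X t) (HX t Ht) e) as [d1 Hd1].
    destruct (proj1 (continuous_R Y t) (HY t Ht) e) as [d2 Hd2].
    exists (mkposreal (Rmin d1 d2) ltac:(apply Rmin_pos; apply cond_pos)); simpl.
    intros s Hs. apply Rmin_Rgt in Hs as [Hs1 Hs2].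
    eapply Rle_lt_trans; [apply Rmin_lipschitz|]. apply Rmax_lub_lt.
    + eapply Rle_lt_trans; [apply room_lipschitz | now apply Hd1].
    + eapply Rle_lt_trans; [apply room_lipschitz | now apply Hd2].
  - intros t Ht. destruct (HO t Ht) as [[Hc Hd] [Hj1 Hj2]].
    apply Rmin_pos; apply room_pos; assumption.
  - exists m. split; [exact Hm|]. intros t u v Ht Hu Hv.
    specialize (Hmk t Ht). unfold k in Hmk.
    assert (A1 := Rmin_l (room c d (X t)) (room j1 j2 (Y t))).
    assert (A2 := Rmin_r (room c d (X t)) (room j1 j2 (Y t))).
    destruct (HO t Ht) as [[Hc Hd] [Hj1 Hj2]].
    split; [apply (room_inside c d (X t) u) | apply (room_inside j1 j2 (Y t) v)];
      try assumption; lra.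
Qed.



(** * The Euler-Lagrange equation *)

Definition is_extremum (c : R) (d j1 j2 : Rbar) (L : R -> R -> R) (a b alpha beta : R)
  (g g' : R -> R) : Prop :=
  (forall h h', inX c d j1 j2 L a b alpha beta h h' ->
     lag_value L a b g g' <= lag_value L a b h h') \/
  (forall h h', inX c d j1 j2 L a b alpha beta h h' ->
     lag_value L a b h h' <= lag_value L a b g g').

Section EulerLagrange.

Context {c : R} {d j1 j2 : Rbar} {L : R -> R -> R} {a b alpha beta : R} {g g' : R -> R}.

Hypothesis L_C1 : C1_on (inO c d j1 j2) L.
Hypothesis g_in_X : inX c d j1 j2 L a b alpha beta g g'.
Hypothesis g_extremum : is_extremum c d j1 j2 L a b alpha beta g g'.

Lemma continuous_g (t : R) : a < t < b -> continuous g t.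
Proof.
  destruct g_in_X as (_ & [Hd _] & _). intros Ht. eapply is_derive_continuous_R, Hd, Ht.
Qed.

Lemma continuous_g' (t : R) : a < t < b -> continuous g' t.
Proof. destruct g_in_X as (_ & _ & [Hc _] & _). exact (Hc t). Qed.

Lemma curve_in_O (t : R) : a < t <= b -> inO c d j1 j2 (g t) (g' t).
Proof. destruct g_in_X as (_ & _ & _ & HO & _). exact (HO t). Qed.

Lemma continuous_along_curve (F : R * R -> R) :
  (forall x y, inO c d j1 j2 x y -> continuous F (x, y)) ->
  forall t, a < t < b -> continuous (fun s => F (g s, g' s)) t.
Proof.
  intros HF t Ht. apply continuous_comp_pair; [now apply continuous_g | now apply continuous_g' |].
  apply HF, curve_in_O. lra.
Qed.

Lemma left_continuous_along_curve (F : R * R -> R) :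
  a < b -> continuous F (g b, g' b) ->
  filterlim (fun s => F (g s, g' s)) (at_left b) (locally (F (g b, g' b))).
Proof.
  intros Hab HF. destruct g_in_X as (Hg & _ & [_ Hg'b] & _).
  apply (filterlim_comp_pair _ F g g'); [|exact Hg'b | exact HF].
  apply (filterlim_filter_le_1 _ (at_left_le_within_segment a b Hab)), Hg. lra.
Qed.

Section Perturbation.

Variables (p q : R) (eta eta' : R -> R).

Hypotheses (a_lt_p : a < p) (p_lt_q : p < q) (q_lt_b : q < b).
Hypothesis eta'_cont : forall t, continuous eta' t.
Hypothesis eta_deriv : forall t, is_derive eta t (eta' t).
Hypothesis eta_support : forall t, t <= p \/ q <= t -> eta t = 0 /\ eta' t = 0.

Lemma continuous_eta (t : R) : continuous eta t.
Proof. eapply is_derive_continuous_R, eta_deriv. Qed.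

Lemma perturbation_margin : exists e0, 0 < e0 /\ forall e, Rabs e < e0 ->
  forall t, a < t <= b -> inO c d j1 j2 (g t + e * eta t) (g' t + e * eta' t).
Proof.
  destruct (inO_uniform_margin c d j1 j2 g g' p q) as [m [Hm Hmargin]].
  { lra. }
  { intros t Ht. apply curve_in_O. lra. }
  { intros t Ht. apply continuous_g. lra. }
  { intros t Ht. apply continuous_g'. lra. }
  destruct (continuous_segment_bounded eta p q) as [M1 [HM1 Heta]];
    [lra | intros; apply continuous_eta|].
  destruct (continuous_segment_bounded eta' p q) as [M2 [HM2 Heta']];
    [lra | intros; apply eta'_cont|].
  exists (m / (M1 + M2 + 1)). split; [apply Rdiv_lt_0_compat; lra|].
  intros e He t Ht.
  assert (Hsmall : forall z, Rabs z <= M1 + M2 -> Rabs (e * z) < m).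
  { intros z Hz. rewrite Rabs_mult.
    apply (Rle_lt_trans _ (m / (M1 + M2 + 1) * (M1 + M2))).
    - apply Rmult_le_compat; try apply Rabs_pos; lra.
    - apply (Rmult_lt_reg_r (M1 + M2 + 1)); [lra|]. field_simplify; lra. }
  destruct (Rle_lt_dec t p) as [Htp | Hpt]; [|destruct (Rle_lt_dec q t) as [Hqt | Htq]].
  - destruct (eta_support t (or_introl Htp)) as [-> ->].
    rewrite !Rmult_0_r, !Rplus_0_r. now apply curve_in_O.
  - destruct (eta_support t (or_intror Hqt)) as [-> ->].
    rewrite !Rmult_0_r, !Rplus_0_r. now apply curve_in_O.
  - assert (Ht' : p <= t <= q) by lra.
    specialize (Heta t Ht'). specialize (Heta' t Ht').
    apply (Hmargin t); [exact Ht' | ring_simplify (g t + e * eta t - g t) |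
      ring_simplify (g' t + e * eta' t - g' t)]; apply Hsmall; lra.
Qed.

Lemma ex_RInt_perturbed_integrand (e : R) :
  (forall t, a < t <= b -> inO c d j1 j2 (g t + e * eta t) (g' t + e * eta' t)) ->
  ex_RInt (fun t => L (g t + e * eta t) (g' t + e * eta' t)) p q.
Proof.
  intros HO. apply ex_RInt_segment; [lra|]. intros t Ht.
  apply (continuous_comp_pair (fun z => L (fst z) (snd z))
           (fun t => g t + e * eta t) (fun t => g' t + e * eta' t)).
  - apply continuous_plus_scal; [apply continuous_g; lra | apply continuous_eta].
  - apply continuous_plus_scal; [apply continuous_g'; lra | apply eta'_cont].
  - apply L_C1, HO. lra.
Qed.

Lemma eventually_unperturbed_at_left : at_left b (fun s => eta s = 0 /\ eta' s = 0).
Proof.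
  exists (mkposreal (b - q) ltac:(lra)); simpl. intros s Hs _.
  apply eta_support. right. apply ball_R, Rabs_lt_between' in Hs. lra.
Qed.

Lemma is_RInt_gen_perturbed (e : R) :
  (forall t, a < t <= b -> inO c d j1 j2 (g t + e * eta t) (g' t + e * eta' t)) ->
  is_RInt_gen (lag_integrand L (fun t => g t + e * eta t) (fun t => g' t + e * eta' t))
    (at_right a) (at_point b)
    (lag_value L a b g g' + (RInt (fun t => L (g t + e * eta t) (g' t + e * eta' t)) p q
                             - RInt (lag_integrand L g g') p q)).
Proof.
  intros HO. destruct g_in_X as (_ & _ & _ & _ & _ & _ & [l Hl]).
  unfold lag_value. rewrite (is_RInt_gen_unique _ _ Hl).
  apply (is_RInt_gen_change_on_segment (lag_integrand L g g')); try lra; [| | | exact Hl].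
  - intros t Ht. unfold lag_integrand.
    destruct (eta_support t ltac:(lra)) as [-> ->]. f_equal; ring.
  - exact (ex_RInt_perturbed_integrand e HO).
  - apply (ex_RInt_ext (fun t => L (g t + 0 * eta t) (g' t + 0 * eta' t))).
    + intros t _. unfold lag_integrand. f_equal; ring.
    + apply ex_RInt_perturbed_integrand. intros t Ht.
      rewrite !Rmult_0_l, !Rplus_0_r. now apply curve_in_O.
Qed.

Lemma perturbation_in_X (e : R) :
  (forall t, a < t <= b -> inO c d j1 j2 (g t + e * eta t) (g' t + e * eta' t)) ->
  inX c d j1 j2 L a b alpha beta (fun t => g t + e * eta t) (fun t => g' t + e * eta' t).
Proof.
  intros HO. destruct g_in_X as (Hg & [Hgd Hgb] & [Hg'c Hg'b] & _ & Ha & Hb & _).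
  destruct (eta_support a ltac:(lra)) as [Ea _]. destruct (eta_support b ltac:(lra)) as [Eb Eb'].
  refine (conj _ (conj (conj _ _) (conj (conj _ _) (conj HO (conj _ (conj _ _)))))).
  - intros t Ht. apply (filterlim_plus_scal _ g eta); [now apply Hg|].
    apply (filterlim_filter_le_1 _ (filter_le_within _)), continuous_eta.
  - intros t Ht. apply (is_derive_plus g (fun s => e * eta s));
      [now apply Hgd | now apply is_derive_scal].
  - rewrite Eb', Rmult_0_r, Rplus_0_r.
    apply (filterlim_ext_loc (fun s => (g s - g b) / (s - b))); [|exact Hgb].
    eapply filter_imp; [|exact eventually_unperturbed_at_left].
    intros s [-> _]. rewrite Eb. f_equal. ring.
  - intros t Ht. apply continuous_plus_scal; [now apply Hg'c | apply eta'_cont].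
  - rewrite Eb', Rmult_0_r, Rplus_0_r.
    apply (filterlim_ext_loc g'); [|exact Hg'b].
    eapply filter_imp; [|exact eventually_unperturbed_at_left].
    intros s [_ ->]. ring.
  - rewrite Ea, Ha. ring.
  - rewrite Eb, Hb. ring.
  - eexists. now apply is_RInt_gen_perturbed.
Qed.

Lemma is_derive_perturbed_integral (e0 : R) : 0 < e0 ->
  (forall e, Rabs e < e0 ->
     forall t, a < t <= b -> inO c d j1 j2 (g t + e * eta t) (g' t + e * eta' t)) ->
  is_derive (fun e => RInt (fun t => L (g t + e * eta t) (g' t + e * eta' t)) p q) 0
    (RInt (fun t => pdx L (g t, g' t) * eta t + pdy L (g t, g' t) * eta' t) p q).
Proof.
  intros He0 HO.
  set (D := fun u t => pdx L (g t + u * eta t, g' t + u * eta' t) * eta t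
                       + pdy L (g t + u * eta t, g' t + u * eta' t) * eta' t).
  assert (Hline : forall u t, Rabs u < e0 -> a < t <= b ->
            is_derive (fun u => L (g t + u * eta t) (g' t + u * eta' t)) u (D u t)).
  { intros u t Hu Ht. apply (is_derive_along_line (inO c d j1 j2)); [exact L_C1|].
    now apply inO_locally_2d, HO. }
  assert (H0 : Rabs 0 < e0) by now rewrite Rabs_R0.
  replace (RInt (fun t => pdx L (g t, g' t) * eta t + pdy L (g t, g' t) * eta' t) p q)
    with (RInt (fun t => Derive (fun u => L (g t + u * eta t) (g' t + u * eta' t)) 0) p q).
  2: { apply RInt_ext_R. intros t Ht. rewrite Rmin_left, Rmax_right in Ht by lra.
       transitivity (D 0 t); [apply is_derive_unique, Hline; [exact H0 | lra]|].
       unfold D. now rewrite !Rmult_0_l, !Rplus_0_r. }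
  apply is_derive_RInt_param.
  - exists (mkposreal e0 He0). intros u Hu t Ht. rewrite Rmin_left, Rmax_right in Ht by lra.
    eexists. apply Hline; [now rewrite <- (Rminus_0_r u) | lra].
  - intros t Ht. rewrite Rmin_left, Rmax_right in Ht by lra.
    apply (continuity_2d_pt_ext_loc D).
    + exists (mkposreal (Rmin e0 (Rmin (p - a) (b - q)))
                ltac:(repeat apply Rmin_pos; lra)); simpl.
      intros u v Hu Hv.
      apply Rmin_Rgt in Hu as [Hu _]. apply Rmin_Rgt in Hv as [_ Hv].
      apply Rmin_Rgt in Hv as [Hv1 Hv2]. apply Rabs_lt_between' in Hv1, Hv2.
      symmetry. apply is_derive_unique, Hline; [rewrite <- (Rminus_0_r u); exact Hu | lra].
    + destruct (L_C1 _ _ (HO 0 H0 t ltac:(lra))) as (_ & _ & _ & Cx & Cy).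
      apply continuity_2d_pt_derivative_along_lines; try assumption;
        apply continuity_pt_filterlim;
        [apply continuous_g | apply continuous_g' | apply continuous_eta | apply eta'_cont]; lra.
  - exists (mkposreal e0 He0). intros u Hu.
    apply ex_RInt_perturbed_integrand, HO. now rewrite <- (Rminus_0_r u).
Qed.

Lemma first_variation_vanishes :
  RInt (fun t => pdx L (g t, g' t) * eta t + pdy L (g t, g' t) * eta' t) p q = 0.
Proof.
  destruct perturbation_margin as [e0 [He0 HO]].
  set (Phi := fun e => RInt (fun t => L (g t + e * eta t) (g' t + e * eta' t)) p q).
  assert (Hvalue : forall e, Rabs e < e0 ->
    lag_value L a b (fun t => g t + e * eta t) (fun t => g' t + e * eta' t)
    - lag_value L a b g g' = Phi e - Phi 0).
  { intros e He. unfold lag_value at 1.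
    rewrite (is_RInt_gen_unique _ _ (is_RInt_gen_perturbed e (HO e He))).
    replace (Phi 0) with (RInt (lag_integrand L g g') p q).
    - unfold Phi. ring.
    - apply RInt_ext_R. intros t _. unfold lag_integrand. f_equal; ring. }
  apply (is_derive_local_extremum Phi 0 _ e0 He0 (is_derive_perturbed_integral e0 He0 HO)).
  destruct g_extremum as [Hmin | Hmax]; [left | right]; intros e He;
    rewrite Rminus_0_r in He; specialize (Hvalue e He).
  - specialize (Hmin _ _ (perturbation_in_X e (HO e He))). lra.
  - specialize (Hmax _ _ (perturbation_in_X e (HO e He))). lra.
Qed.

End Perturbation.

Lemma integrated_euler_lagrange (p q : R) : a < p -> p < q -> q < b ->
  exists C, forall s, p < s < q ->
    pdy L (g s, g' s) = RInt (fun t => pdx L (g t, g' t)) p s + C.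
Proof.
  intros Hap Hpq Hqb.
  set (Lx := fun t => pdx L (g t, g' t)).
  set (Ly := fun t => pdy L (g t, g' t)).
  set (A := fun s => RInt Lx p s).
  assert (Lx_cont : forall t, a < t < b -> continuous Lx t).
  { apply (continuous_along_curve (pdx L)). intros x y Hxy. apply (L_C1 x y Hxy). }
  assert (Ly_cont : forall t, a < t < b -> continuous Ly t).
  { apply (continuous_along_curve (pdy L)). intros x y Hxy. apply (L_C1 x y Hxy). }
  assert (A_deriv : forall t, a < t < b -> is_derive A t (Lx t)).
  { intros t Ht. apply (is_derive_RInt_interior Lx a b); auto. lra. }
  destruct (du_Bois_Reymond (fun s => Ly s - A s) p q Hpq) as [C HC].
  - intros t Ht. apply (continuous_minus Ly A); [apply Ly_cont; lra|].
    eapply is_derive_continuous_R, A_deriv. lra.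
  - intros eta eta' Heta' Heta Hsupp.
    assert (Hvar : RInt (fun t => Lx t * eta t + Ly t * eta' t) p q = 0)
      by (apply (first_variation_vanishes p q eta eta'); assumption).
    assert (Hparts : is_RInt (fun t => Lx t * eta t + A t * eta' t) p q 0).
    { destruct (Hsupp p ltac:(lra)) as [Ep _], (Hsupp q ltac:(lra)) as [Eq _].
      replace 0 with (A q * eta q - A p * eta p) by (rewrite Ep, Eq; ring).
      apply (is_RInt_scal_derive A eta Lx eta' p q); rewrite Rmin_left, Rmax_right by lra;
        intros t Ht; [apply A_deriv | apply Heta | apply Lx_cont | apply Heta']; lra. }
    assert (Hcont : forall k : R -> R, (forall t, a < t < b -> continuous k t) ->
              ex_RInt (fun t => Lx t * eta t + k t * eta' t) p q).
    { intros k Hk. apply ex_RInt_segment; [lra|]. intros t Ht.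
      apply (continuous_plus (fun t => Lx t * eta t) (fun t => k t * eta' t)).
      - apply (continuous_mult Lx eta); [apply Lx_cont; lra|].
        eapply is_derive_continuous_R, Heta.
      - apply (continuous_mult k eta'); [apply Hk; lra | apply Heta']. }
    rewrite (RInt_ext_R _ (fun t => (Lx t * eta t + Ly t * eta' t)
                                   - (Lx t * eta t + A t * eta' t))) by (intros; ring).
    rewrite RInt_minus_R, Hvar, (is_RInt_unique _ _ _ _ Hparts);
      [apply Rminus_eq_0 | |].
    + now apply Hcont.
    + apply Hcont. intros t Ht. eapply is_derive_continuous_R, A_deriv, Ht.
  - exists C. intros s Hs. specialize (HC s Hs). cbv beta in HC. change (Ly s = A s + C). lra.
Qed.

Lemma is_derive_pdy_along_curve (t : R) : a < t < b ->
  is_derive (fun s => pdy L (g s, g' s)) t (pdx L (g t, g' t)).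
Proof.
  intros Ht. set (p := (a + t) / 2). set (q := (t + b) / 2).
  destruct (integrated_euler_lagrange p q) as [C HC]; [unfold p, q; lra .. |].
  apply (is_derive_ext_loc (fun s => RInt (fun r => pdx L (g r, g' r)) p s + C)).
  - exists (mkposreal (Rmin (t - p) (q - t)) ltac:(apply Rmin_pos; unfold p, q; lra)); simpl.
    intros s Hs. apply ball_R, Rmin_Rgt in Hs as [Hs1 Hs2].
    symmetry. apply HC. apply Rabs_lt_between' in Hs1, Hs2. lra.
  - rewrite <- (Rplus_0_r (pdx L (g t, g' t))).
    apply (is_derive_plus _ (fun _ => C));
      [|exact (is_derive_const (K := R_AbsRing) (V := R_NormedModule) C t)].
    apply (is_derive_RInt_interior (fun r => pdx L (g r, g' r)) a b); [unfold p; lra | exact Ht |].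
    apply (continuous_along_curve (pdx L)). intros x y Hxy. apply (L_C1 x y Hxy).
Qed.

End EulerLagrange.

Theorem theorem2 (c : R) (d j1 j2 : Rbar) (L : R -> R -> R)
  (a b alpha beta : R) (g g' : R -> R) :
  C1_on (inO c d j1 j2) L ->
  a < b ->
  inX c d j1 j2 L a b alpha beta g g' ->
  ((forall h h', inX c d j1 j2 L a b alpha beta h h' ->
      lag_value L a b g g' <= lag_value L a b h h') \/
   (forall h h', inX c d j1 j2 L a b alpha beta h h' ->
      lag_value L a b h h' <= lag_value L a b g g')) ->
  deriv_on_aB (fun t => pdy L (g t, g' t)) (fun t => pdx L (g t, g' t)) a b.
Proof.
  intros HC Hab HX Hext.
  assert (Hb : inO c d j1 j2 (g b) (g' b)) by (apply (curve_in_O HX); lra).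
  destruct (HC _ _ Hb) as (_ & _ & _ & Cx & Cy).
  split.
  - exact (is_derive_pdy_along_curve HC HX Hext).
  - apply (left_derive_of_interior_derive
             (fun t => pdy L (g t, g' t)) (fun t => pdx L (g t, g' t)) a).
    + exact Hab.
    + exact (is_derive_pdy_along_curve HC HX Hext).
    + exact (left_continuous_along_curve HX (pdy L) Hab Cy).
    + exact (left_continuous_along_curve HX (pdx L) Hab Cx).
Qed.
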